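(* Let $X$ be a topological space, let $A \subseteq X$ be an open subset, and let $p : X \to X/A$ be the quotient map collapsing $A$ to a single point $* = p(A)$. Let $\overline{\{*\}}$ denote the closure of $\{*\}$ in $X/A$. Then every loop $\alpha : [0,1] \to X/A$ based at $*$ with $\alpha([0,1]) \subseteq \overline{\{*\}}$ is nullhomotopic relative to the endpoints.
   Context: For $A\subseteq X$, $X/A$ denotes the quotient space obtained from $X$ by identifying all points of $A$ to a single point, denoted $*$, and $p:X\to X/A$ is the quotient map. A loop based at $x$ is a continuous map $\alpha:[0,1]\to X$ with $\alpha(0)=\alpha(1)=x$; homotopies of loops are relative to the endpoints. *)

From Stdlib Require Import Reals.
Open Scope R_scope.

Record TopSpace := {
  carrier :> Type;
  is_open : (carrier -> Prop) -> Prop;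
  open_full : is_open (fun _ => True);
  open_inter : forall U V, is_open U -> is_open V -> is_open (fun x => U x /\ V x);
  open_union : forall (I : Type) (F : I -> carrier -> Prop),
      (forall i, is_open (F i)) -> is_open (fun x => exists i, F i x)
}.
Arguments is_open {X} _ : rename.

(* The quotient X/A, concretely: the point [*] (= None) together with the
   points of X outside A.  *)
Definition QPoint (X : TopSpace) (A : X -> Prop) : Type :=
  option {x : X | ~ A x}.

Definition qstar {X : TopSpace} {A : X -> Prop} : QPoint X A := None.

Definition qpreim {X : TopSpace} {A : X -> Prop} (U : QPoint X A -> Prop)
  : X -> Prop :=
  fun x => (A x /\ U None) \/ (exists h : ~ A x, U (Some (exist _ x h))).

Definition quot_open {X : TopSpace} {A : X -> Prop} (U : QPoint X A -> Prop)
  : Prop := is_open (qpreim U).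

Definition closure {Y : Type} (openY : (Y -> Prop) -> Prop) (S : Y -> Prop)
  (y : Y) : Prop :=
  forall U, openY U -> U y -> exists z, S z /\ U z.

Definition I01 (t : R) : Prop := 0 <= t <= 1.

(* f : [0,1] -> Y continuous (values outside [0,1] are irrelevant). *)
Definition cont_I {Y : Type} (openY : (Y -> Prop) -> Prop) (f : R -> Y) : Prop :=
  forall U, openY U -> forall t, I01 t -> U (f t) ->
    exists d, d > 0 /\ forall s, I01 s -> Rabs (s - t) < d -> U (f s).

Definition cont_I2 {Y : Type} (openY : (Y -> Prop) -> Prop) (H : R -> R -> Y)
  : Prop :=
  forall U, openY U -> forall s t, I01 s -> I01 t -> U (H s t) ->
    exists d, d > 0 /\ forall s' t', I01 s' -> I01 t' ->
      Rabs (s' - s) < d -> Rabs (t' - t) < d -> U (H s' t').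

Definition nullhomotopic_rel {Y : Type} (openY : (Y -> Prop) -> Prop)
  (x0 : Y) (alpha : R -> Y) : Prop :=
  exists H : R -> R -> Y,
    cont_I2 openY H /\
    (forall s, I01 s -> H s 0 = alpha s) /\
    (forall s, I01 s -> H s 1 = x0) /\
    (forall t, I01 t -> H 0 t = x0 /\ H 1 t = x0).

(* Every open set containing a point of the closure of {*} contains *, so the
   "jump" homotopy that equals alpha at time 0 and is constantly * afterwards is
   already continuous.  The argument works in any space. *)
From Stdlib Require Import Reals Lra.
Open Scope R_scope.

Section JumpHomotopy.

Variables (Y : Type) (openY : (Y -> Prop) -> Prop) (y0 : Y).

Lemma closure_point_open_mem (y : Y) (U : Y -> Prop) :
  closure openY (fun z => z = y0) y -> openY U -> U y -> U y0.
Proof.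
  intros hy hU Uy.
  destruct (hy U hU Uy) as [z [-> Uz]].
  exact Uz.
Qed.

Definition jump_homotopy (alpha : R -> Y) (s t : R) : Y :=
  if Rle_dec t 0 then alpha s else y0.

Lemma cont_I2_jump_homotopy (alpha : R -> Y) :
  cont_I openY alpha ->
  (forall t, I01 t -> closure openY (fun z => z = y0) (alpha t)) ->
  cont_I2 openY (jump_homotopy alpha).
Proof.
  intros hcont himg U hU s t hs ht.
  unfold jump_homotopy.
  destruct (Rle_dec t 0) as [t_le0 | t_gt0]; intro HU.
  - destruct (hcont U hU s hs HU) as [d [d_pos Hd]].
    exists d; split; [exact d_pos |].
    intros s' t' hs' _ ds _.
    destruct (Rle_dec t' 0).
    + exact (Hd s' hs' ds).
    + exact (closure_point_open_mem (alpha s) U (himg s hs) hU HU).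
  - exists t; split; [lra |].
    intros s' t' _ _ _ dt.
    destruct (Rle_dec t' 0) as [t'_le0 | _]; [| exact HU].
    apply Rabs_def2 in dt; lra.
Qed.

Lemma loop_in_closure_nullhomotopic (alpha : R -> Y) :
  cont_I openY alpha -> alpha 0 = y0 -> alpha 1 = y0 ->
  (forall t, I01 t -> closure openY (fun z => z = y0) (alpha t)) ->
  nullhomotopic_rel openY y0 alpha.
Proof.
  intros hcont h0 h1 himg.
  exists (jump_homotopy alpha).
  unfold jump_homotopy.
  split; [exact (cont_I2_jump_homotopy alpha hcont himg) |].
  split; [| split].
  - intros s _. destruct (Rle_dec 0 0); [reflexivity | lra].
  - intros s _. destruct (Rle_dec 1 0); [lra | reflexivity].
  - intros t _. destruct (Rle_dec t 0); split; auto.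
Qed.

End JumpHomotopy.

Theorem lemma3p1 (X : TopSpace) (A : X -> Prop) (hA : is_open A)
  (alpha : R -> QPoint X A)
  (hcont : cont_I (@quot_open X A) alpha)
  (h0 : alpha 0 = qstar) (h1 : alpha 1 = qstar)
  (himg : forall t, I01 t ->
     closure (@quot_open X A) (fun y => y = qstar) (alpha t)) :
  nullhomotopic_rel (@quot_open X A) qstar alpha.
Proof.
  exact (loop_in_closure_nullhomotopic _ _ _ alpha hcont h0 h1 himg).
Qed.
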